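(* Let $A\subset\Pi$ be a finite set with $2\in A\neq\{2\}$, and let $\alpha:A\to\mathbb{N}_0$ be a function with $\alpha(2)=1$ and $\alpha(p)\in\{0,\dots,p-1\}$ for all $p\in A\setminus\{2\}$. Let $x$ be the product of the odd primes in $A$ and let $y$ be any element of $\mathbb{N}\cap\bigcap_{p\in A}(\alpha(p)+p\mathbb{Z})$. Then the set $E=\{y,x,2x\}$ satisfies $A_E=A$ and $\alpha_E=\alpha$.
   Context: $\mathbb{N}=\{1,2,\dots\}$, $\mathbb{N}_0=\{0\}\cup\mathbb{N}$, $\Pi$ the set of primes, $\Pi_z$ the set of prime divisors of $z$. For a nonempty finite $E\subseteq\mathbb{N}$: $\Pi_E=\bigcap_{z\in E}\Pi_z$; $A_E=\{p\in\Pi:\exists k\in\mathbb{N}\ (E\subseteq\{0,k\}+p\mathbb{Z})\}$ where $\{0,k\}+p\mathbb{Z}=p\mathbb{Z}\cup(k+p\mathbb{Z})$; and $\alpha_E:A_E\to\mathbb{N}_0$ is the unique function such that (i) $0\le\alpha_E(p)<p$ for all $p\in A_E$, (ii) $E\subseteq\{0,\alpha_E(p)\}+p\mathbb{Z}$ for all $p\in A_E$, (iii) $\alpha_E(2)=1$ and $\alpha_E(p)=0$ for all $p\in\Pi_E\setminus\{2\}$. *)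

From mathcomp Require Import all_boot.
Set Implicit Arguments. Unset Strict Implicit. Unset Printing Implicit Defensive.

(* A finite nonempty E ⊆ ℕ is given as a sequence of positive naturals. *)

Definition Pi_E (E : seq nat) (p : nat) : Prop :=
  prime p /\ forall z, z \in E -> p %| z.

Definition in_0k_mod (p k z : nat) : Prop :=
  p %| z \/ z = k %[mod p].

Definition A_E (E : seq nat) (p : nat) : Prop :=
  prime p /\ exists k, 0 < k /\ forall z, z \in E -> in_0k_mod p k z.

(* The defining properties (i)-(iii) of α_E : A_E → ℕ₀ (values outside A_E
   are irrelevant). α_E is the unique function with these properties. *)
Definition is_alpha_E (E : seq nat) (f : nat -> nat) : Prop :=
  (forall p, A_E E p -> f p < p) /\
  (forall p, A_E E p -> forall z, z \in E -> in_0k_mod p (f p) z) /\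
  (A_E E 2 -> f 2 = 1) /\
  (forall p, Pi_E E p -> p <> 2 -> f p = 0).

From mathcomp Require Import all_boot.

Set Implicit Arguments.
Unset Strict Implicit.
Unset Printing Implicit Defensive.

(* Every odd prime of A divides x and 2x, while y lies in the class alpha(p);
   for p = 2, y and x are odd and 2x is even.  An odd prime p outside A divides
   neither x nor 2x, and x, 2x are distinct modulo p, so they cannot both lie
   in a single class k + pZ.  Finally alpha_E is unique for any E: off Pi_E its
   value at p is the residue of an element of E not divisible by p, and on
   Pi_E it is prescribed by (iii). *)

Lemma prime_odd_neq2 p : prime p -> p != 2 -> odd p.
Proof. by case/even_prime=> [->|]. Qed.

Lemma prime_dvd_prod_odd (A : seq nat) p :
  {in A, forall q, prime q} -> prime p ->
  (p %| \prod_(q <- A | odd q) q) = (p \in A) && odd p.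
Proof.
move=> prime_A pp; rewrite Euclid_dvd_prod // big_has_cond.
apply/hasP/andP=> [[q qA /andP[oq]] | [pA op]]; last by exists p => //=; rewrite op dvdnn.
by rewrite (dvdn_prime2 pp (prime_A _ qA)) => /eqP->.
Qed.

Lemma in_0k_mod_residue p k z :
  k < p -> ~~ (p %| z) -> in_0k_mod p k z -> k = z %% p.
Proof. by move=> ltkp ndz [dz|->]; [rewrite dz in ndz | rewrite modn_small]. Qed.

Lemma not_in_0k_mod_double p k x :
  prime p -> odd p -> ~~ (p %| x) ->
  in_0k_mod p k x -> ~ in_0k_mod p k (2 * x).
Proof.
move=> pp op ndx [dx|xk]; first by rewrite dx in ndx.
case=> [|x2k].
  rewrite Euclid_dvdM // dvdn_prime2 // (negbTE ndx) orbF => /eqP p2.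
  by rewrite p2 in op.
suff : x + x == x + 0 %[mod p] by rewrite eqn_modDl mod0n -/(p %| x) (negbTE ndx).
by rewrite addn0 addnn -mul2n x2k xk.
Qed.

Lemma A_E_intro E p k :
  prime p -> {in E, forall z, in_0k_mod p k z} -> A_E E p.
Proof.
move=> pp E_k; split=> //; exists (k + p); split.
  by rewrite addn_gt0 (prime_gt0 pp) orbT.
by move=> z /E_k[dz|zk]; [left | right; rewrite modnDr].
Qed.

Lemma is_alpha_E_unique E f g :
  is_alpha_E E f -> is_alpha_E E g -> forall p, A_E E p -> f p = g p.
Proof.
move=> [f_lt [f_mod [f_2 f_0]]] [g_lt [g_mod [g_2 g_0]]] p AE_p.
have [p2|p_neq2] := eqVneq p 2; first by subst p; rewrite f_2 ?g_2.
have [/hasP[z zE ndz] | /hasPn dvd_E] := boolP (has (fun z => ~~ (p %| z)) E).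
  rewrite (in_0k_mod_residue (f_lt _ AE_p) ndz (f_mod _ AE_p _ zE)).
  by rewrite (in_0k_mod_residue (g_lt _ AE_p) ndz (g_mod _ AE_p _ zE)).
have Pi_E_p : Pi_E E p by split; [case: AE_p | move=> z /dvd_E; rewrite negbK].
by rewrite f_0 ?g_0 //; apply/eqP.
Qed.

Section ThreeElementSet.

Variables (A : seq nat) (alpha : nat -> nat) (y : nat).
Hypothesis prime_A : forall p, p \in A -> prime p.
Hypothesis A_2 : 2 \in A.
Hypothesis alpha_2 : alpha 2 = 1.
Hypothesis alpha_lt : forall p, p \in A -> p != 2 -> alpha p < p.
Hypothesis y_mod : forall p, p \in A -> y = alpha p %[mod p].

Local Notation x := (\prod_(p <- A | odd p) p).
Local Notation E := [:: y; x; 2 * x].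

Lemma odd_x : odd x.
Proof. by apply: (big_ind odd) => // m n om on; rewrite oddM om. Qed.

Lemma alpha_in_0k_mod p : p \in A -> {in E, forall z, in_0k_mod p (alpha p) z}.
Proof.
move=> pA z.
have dvd_x : p != 2 -> p %| x.
  by move=> p_neq2; rewrite prime_dvd_prod_odd ?pA ?prime_odd_neq2 ?prime_A.
rewrite !inE => /or3P[] /eqP->; first by right; apply: y_mod.
  have [->|/dvd_x ?] := eqVneq p 2; last by left.
  by right; rewrite alpha_2 modn2 odd_x.
left; have [->|/dvd_x ?] := eqVneq p 2; [exact: dvdn_mulr | exact: dvdn_mull].
Qed.

Lemma A_E_mem p : A_E E p <-> p \in A.
Proof.
split=> [[pp [k [_ E_k]]] | pA]; last exact: A_E_intro (prime_A pA) (alpha_in_0k_mod pA).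
apply/negPn/negP=> pnA.
have p_neq2 : p != 2 by apply: contraNneq pnA => ->.
have ndx : ~~ (p %| x) by rewrite prime_dvd_prod_odd // (negbTE pnA).
by apply: (not_in_0k_mod_double pp (prime_odd_neq2 pp p_neq2) ndx); apply: E_k;
  rewrite !inE eqxx ?orbT.
Qed.

Lemma alpha_is_alpha_E : is_alpha_E E alpha.
Proof.
split.
  move=> p /A_E_mem pA.
  by have [->|] := eqVneq p 2; [rewrite alpha_2 | exact: alpha_lt].
split; first by move=> p /A_E_mem; exact: alpha_in_0k_mod.
split=> // p [pp dvd_E] /eqP p_neq2.
have /andP[pA _] : (p \in A) && odd p.
  by rewrite -prime_dvd_prod_odd // dvd_E ?inE ?eqxx ?orbT.
move: (dvd_E y (mem_head _ _)).
by rewrite /dvdn (y_mod pA) modn_small ?alpha_lt // => /eqP.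
Qed.

End ThreeElementSet.

Theorem lemma3p3 (A : seq nat) (alpha : nat -> nat) (y : nat) :
  uniq A ->
  (forall p, p \in A -> prime p) ->
  2 \in A ->
  (exists2 p, p \in A & p != 2) ->
  alpha 2 = 1 ->
  (forall p, p \in A -> p != 2 -> alpha p < p) ->
  0 < y ->
  (forall p, p \in A -> y = alpha p %[mod p]) ->
  let x := \prod_(p <- A | odd p) p in
  let E := [:: y; x; 2 * x] in
  (forall p, A_E E p <-> p \in A) /\
  is_alpha_E E alpha /\
  (forall f, is_alpha_E E f -> forall p, A_E E p -> f p = alpha p).
Proof.
move=> _ prime_A A_2 _ alpha_2 alpha_lt _ y_mod x E.
have alpha_E := alpha_is_alpha_E prime_A A_2 alpha_2 alpha_lt y_mod.
split; first exact: A_E_mem prime_A A_2 alpha_2 y_mod.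
by split=> // f f_E; apply: is_alpha_E_unique.
Qed.
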